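(* Let $\Phi(f)(x,y)=1-f(1-x,1-y)$. If $\otimes$ is a uninorm satisfying properties $A$ and $B$, then the rearrangement inequality and the dual rearrangement inequality hold for $(\otimes,\Phi(\otimes))$. If $\oplus$ is a uninorm satisfying properties $A'$ and $B'$, then the rearrangement inequality and the dual rearrangement inequality hold for $(\Phi(\oplus),\oplus)$.
   Context: A uninorm is a function $\otimes:[0,1]^2\to[0,1]$ that is commutative, associative, monotonic ($x\leq y$ implies $x\otimes z\leq y\otimes z$), and has an identity element $e\in[0,1]$ (note $\Phi$ of a uninorm is again a uninorm). Properties of $f:[0,1]^2\to[0,1]$: $A$: for all $0\leq x\leq y\leq z\leq w\leq 1$, $w+x\leq y+z\Rightarrow f(x,w)\leq f(y,z)$; $A'$: for all $0\leq x\leq y\leq z\leq w\leq 1$, $w+x\geq y+z\Rightarrow f(x,w)\geq f(y,z)$; $B$: for all $0\leq x\leq y\leq 1$, $0\leq z\leq w\leq1$, $f(x,w)-f(x,z)\leq f(y,w)-f(y,z)$; $B'$: same with $\geq$. For uninorms, $(\otimes,\oplus)$ satisfies the rearrangement inequality if for every $n\geq1$, all $0\leq x_1\leq\cdots\leq x_n\leq 1$, $0\leq y_1\leq\cdots\leq y_n\leq 1$ and every permutation $\sigma$ of $\{1,\dots,n\}$, $$(x_n\otimes y_1)\oplus\cdots\oplus(x_1\otimes y_n)\leq (x_{\sigma(1)}\otimes y_1)\oplus\cdots\oplus(x_{\sigma(n)}\otimes y_n)\leq (x_1\otimes y_1)\oplus\cdots\oplus(x_n\otimes y_n),$$ and the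 dual rearrangement inequality if for all such data $$(x_n\oplus y_1)\otimes\cdots\otimes(x_1\oplus y_n)\geq (x_{\sigma(1)}\oplus y_1)\otimes\cdots\otimes(x_{\sigma(n)}\oplus y_n)\geq (x_1\oplus y_1)\otimes\cdots\otimes(x_n\oplus y_n).$$ *)

From Stdlib Require Import Reals Lra.
Open Scope R_scope.

Definition in01 (x : R) : Prop := 0 <= x <= 1.

Definition is_uninorm (u : R -> R -> R) : Prop :=
  (forall x y, in01 x -> in01 y -> in01 (u x y)) /\
  (forall x y, in01 x -> in01 y -> u x y = u y x) /\
  (forall x y z, in01 x -> in01 y -> in01 z -> u (u x y) z = u x (u y z)) /\
  (forall x y z, in01 x -> in01 y -> in01 z -> x <= y -> u x z <= u y z) /\
  (exists e, in01 e /\ forall x, in01 x -> u x e = x).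

Definition Phi (f : R -> R -> R) : R -> R -> R :=
  fun x y => 1 - f (1 - x) (1 - y).

Definition propA (f : R -> R -> R) : Prop :=
  forall x y z w, 0 <= x -> x <= y -> y <= z -> z <= w -> w <= 1 ->
    w + x <= y + z -> f x w <= f y z.

Definition propA' (f : R -> R -> R) : Prop :=
  forall x y z w, 0 <= x -> x <= y -> y <= z -> z <= w -> w <= 1 ->
    w + x >= y + z -> f x w >= f y z.

Definition propB (f : R -> R -> R) : Prop :=
  forall x y z w, 0 <= x -> x <= y -> y <= 1 -> 0 <= z -> z <= w -> w <= 1 ->
    f x w - f x z <= f y w - f y z.

Definition propB' (f : R -> R -> R) : Prop :=
  forall x y z w, 0 <= x -> x <= y -> y <= 1 -> 0 <= z -> z <= w -> w <= 1 ->
    f x w - f x z >= f y w - f y z.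

(* foldop op a k = (...((a 0 op a 1) op a 2) ... op a k): combines k+1 terms. *)
Fixpoint foldop (op : R -> R -> R) (a : nat -> R) (k : nat) : R :=
  match k with
  | O => a O
  | S k' => op (foldop op a k') (a (S k'))
  end.

Definition is_perm (n : nat) (sigma : nat -> nat) : Prop :=
  (forall i, (i < n)%nat -> (sigma i < n)%nat) /\
  (forall i j, (i < n)%nat -> (j < n)%nat -> sigma i = sigma j -> i = j).

(* Data: 0 <= x_0 <= ... <= x_{n-1} <= 1 (0-indexed version of x_1..x_n). *)
Definition sorted01 (n : nat) (x : nat -> R) : Prop :=
  (forall i, (i < n)%nat -> in01 (x i)) /\
  (forall i j, (i <= j)%nat -> (j < n)%nat -> x i <= x j).

Definition rearrangement (otimes oplus : R -> R -> R) : Prop :=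
  forall (n : nat) (x y : nat -> R) (sigma : nat -> nat),
    (1 <= n)%nat -> sorted01 n x -> sorted01 n y -> is_perm n sigma ->
    foldop oplus (fun i => otimes (x (n - 1 - i)%nat) (y i)) (n - 1)
      <= foldop oplus (fun i => otimes (x (sigma i)) (y i)) (n - 1) /\
    foldop oplus (fun i => otimes (x (sigma i)) (y i)) (n - 1)
      <= foldop oplus (fun i => otimes (x i) (y i)) (n - 1).

Definition dual_rearrangement (otimes oplus : R -> R -> R) : Prop :=
  forall (n : nat) (x y : nat -> R) (sigma : nat -> nat),
    (1 <= n)%nat -> sorted01 n x -> sorted01 n y -> is_perm n sigma ->
    foldop otimes (fun i => oplus (x (n - 1 - i)%nat) (y i)) (n - 1)
      >= foldop otimes (fun i => oplus (x (sigma i)) (y i)) (n - 1) /\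
    foldop otimes (fun i => oplus (x (sigma i)) (y i)) (n - 1)
      >= foldop otimes (fun i => oplus (x i) (y i)) (n - 1).

From Stdlib Require Import Reals Lra Lia FunctionalExtensionality.
Open Scope R_scope.

(* The n-term inequalities follow from their two-term cases, e.g.
   [(p * s) + (q * r) <= (p * r) + (q * s)] for [p <= q], [r <= s], writing
   [*] and [+] for the inner and outer uninorms: as the outer uninorm is
   commutative and associative, any arrangement is sorted by first sorting all
   terms but the last (induction) and then bubbling the [x] of the last term
   into its place, each step being one two-term exchange; the antitone bound is the monotone one for
   the reversed order.  For the outer uninorm [Phi u] the two-term case reads
   [u (1 - c) (1 - d) <= u (1 - a) (1 - b)] where [c <= a, b <= d] by
   monotonicity and [a + b <= c + d] is property B, so property A applies; the
   dual case is the same inequality at complemented arguments.  The statement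
   for [oplus] is the one for [Phi oplus], since [Phi] is an involution turning
   A', B' into A, B. *)

Lemma foldop_ext op t t' p :
  (forall i, (i <= p)%nat -> t i = t' i) -> foldop op t p = foldop op t' p.
Proof.
  induction p as [|p IH]; intros Ht; simpl.
  - apply Ht; lia.
  - rewrite IH, (Ht (S p)); auto.
Qed.

(* [skip j] enumerates [nat] minus [j] in increasing order and [unskip j] is its
   inverse; [move_last j p] lists [0..p] with [j] moved to position [p]. *)
Definition skip (j i : nat) : nat := if Nat.ltb i j then i else S i.
Definition unskip (j v : nat) : nat := if Nat.ltb v j then v else pred v.
Definition move_last (j p i : nat) : nat := if Nat.ltb i p then skip j i else j.

Ltac case_ltb :=
  unfold move_last, skip, unskip in *;
  repeat match goal with
         | |- context [Nat.ltb ?a ?b] => destruct (Nat.ltb_spec a b)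
         | H : context [Nat.ltb ?a ?b] |- _ => destruct (Nat.ltb_spec a b)
         end.

Lemma skip_le j i m : (i <= m)%nat -> (skip j i <= S m)%nat.
Proof. case_ltb; lia. Qed.

Lemma skip_mono j i i' : (i <= i')%nat -> (skip j i <= skip j i')%nat.
Proof. case_ltb; lia. Qed.

Lemma skip_unskip j v : v <> j -> skip j (unskip j v) = v.
Proof. case_ltb; lia. Qed.

Lemma move_last_le j p i : (j <= p)%nat -> (i <= p)%nat -> (move_last j p i <= p)%nat.
Proof. case_ltb; lia. Qed.

Lemma move_last_id p i : (i <= p)%nat -> move_last p p i = i.
Proof. case_ltb; lia. Qed.

Lemma move_last_succ j p i : (i < p)%nat -> i <> j -> move_last j p i = move_last (S j) p i.
Proof. case_ltb; lia. Qed.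

Lemma is_perm_unskip m sigma :
  is_perm (S (S m)) sigma -> is_perm (S m) (fun i => unskip (sigma (S m)) (sigma i)).
Proof.
  intros [Hlt Hinj].
  assert (Hne : forall i, (i <= m)%nat -> sigma i <> sigma (S m))
    by (intros i Hi E; apply Hinj in E; lia).
  split.
  - intros i Hi. pose proof (Hlt i ltac:(lia)). pose proof (Hlt (S m) ltac:(lia)).
    pose proof (Hne i ltac:(lia)). case_ltb; lia.
  - intros i i' Hi Hi' E. pose proof (Hne i ltac:(lia)). pose proof (Hne i' ltac:(lia)).
    apply Hinj; [lia | lia |]. case_ltb; lia.
Qed.

Lemma is_perm_rev m sigma : is_perm (S m) sigma -> is_perm (S m) (fun i => (m - sigma i)%nat).
Proof.
  intros [Hlt Hinj]. split; [intros; lia |].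
  intros i i' Hi Hi' E. pose proof (Hlt i Hi). pose proof (Hlt i' Hi'). apply Hinj; lia.
Qed.

Section FoldCommSemigroup.

Variable D : R -> Prop.
Variable op : R -> R -> R.
Hypothesis op_closed : forall a b, D a -> D b -> D (op a b).
Hypothesis op_comm : forall a b, D a -> D b -> op a b = op b a.
Hypothesis op_assoc : forall a b c, D a -> D b -> D c -> op (op a b) c = op a (op b c).

Record monotone_preorder (le : R -> R -> Prop) : Prop := {
  mp_refl : forall a, le a a;
  mp_trans : forall a b c, le a b -> le b c -> le a c;
  mp_monol : forall a b c, D a -> D b -> D c -> le a b -> le (op a c) (op b c)
}.

Lemma monotone_preorder_flip le :
  monotone_preorder le -> monotone_preorder (fun a b => le b a).
Proof. intros [Hrefl Htrans Hmono]; split; eauto. Qed.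

Lemma op_right_comm a b c : D a -> D b -> D c -> op (op a b) c = op (op a c) b.
Proof. intros. rewrite !op_assoc, (op_comm b c); auto. Qed.

Lemma foldop_closed t p : (forall i, (i <= p)%nat -> D (t i)) -> D (foldop op t p).
Proof. induction p; intros Ht; simpl; auto. Qed.

Definition entries_in (m : nat) (g : nat -> nat -> R) : Prop :=
  forall i k, (i <= m)%nat -> (k <= m)%nat -> D (g i k).

Section Monotone.

Variable le : R -> R -> Prop.
Hypothesis Hle : monotone_preorder le.

Lemma op_monor a b c : D a -> D b -> D c -> le b c -> le (op a b) (op a c).
Proof. intros. rewrite !(op_comm a) by auto. apply (mp_monol _ Hle); auto. Qed.

Lemma op_foldop_le t t' k p a b :
  (forall i, (i <= p)%nat -> D (t i) /\ D (t' i)) -> D a -> D b -> (k <= p)%nat ->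
  (forall i, (i <= p)%nat -> i <> k -> t i = t' i) ->
  le (op (t k) a) (op (t' k) b) -> le (op (foldop op t p) a) (op (foldop op t' p) b).
Proof.
  intros HD Ha Hb Hk Heq Hkey.
  assert (Ht : forall i, (i <= p)%nat -> D (t i)) by (intros; apply HD; auto).
  assert (Ht' : forall i, (i <= p)%nat -> D (t' i)) by (intros; apply HD; auto).
  induction p as [|p IH]; simpl.
  - replace k with 0%nat in Hkey by lia. exact Hkey.
  - destruct (Nat.eq_dec k (S p)) as [->|Hkp].
    + rewrite (foldop_ext _ t t' p) by (intros; apply Heq; lia).
      rewrite !op_assoc by (auto using foldop_closed).
      apply op_monor; auto using foldop_closed.
    + rewrite <- (Heq (S p)) by lia.
      rewrite (op_right_comm _ (t (S p)) a), (op_right_comm _ (t (S p)) b)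
        by (rewrite ?(Heq (S p)) by lia; auto using foldop_closed).
      apply (mp_monol _ Hle); auto using foldop_closed.
      apply IH; auto; lia.
Qed.

Definition exchange (m : nat) (g : nat -> nat -> R) : Prop :=
  forall i j k l, (i <= j)%nat -> (j <= m)%nat -> (k <= l)%nat -> (l <= m)%nat ->
    le (op (g i l) (g j k)) (op (g i k) (g j l)).

Lemma foldop_move_last_le m g j :
  entries_in m g -> exchange m g -> (j <= m)%nat ->
  le (foldop op (fun i => g (move_last j m i) i) m) (foldop op (fun i => g i i) m).
Proof.
  intros HD Hex Hj. remember (m - j)%nat as d eqn:Hd. revert j Hj Hd.
  induction d as [|d IH]; intros j Hj Hd.
  - replace j with m by lia.
    rewrite (foldop_ext _ _ (fun i => g i i)) by (intros; rewrite move_last_id by lia; auto).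
    apply (mp_refl _ Hle).
  - apply (mp_trans _ Hle) with (foldop op (fun i => g (move_last (S j) m i) i) m);
      [| apply IH; lia].
    destruct m as [|p]; [lia |]. simpl.
    assert (Hin : forall j' i, (j' <= S p)%nat -> (i <= S p)%nat ->
                  D (g (move_last j' (S p) i) i))
      by (intros; apply HD; auto using move_last_le).
    apply op_foldop_le with j; try lia.
    + intros i Hi; split; apply Hin; lia.
    + apply Hin; lia.
    + apply Hin; lia.
    + intros i Hi Hij. rewrite move_last_succ by lia. reflexivity.
    + replace (move_last j (S p) j) with (S j) by (case_ltb; lia).
      replace (move_last j (S p) (S p)) with j by (case_ltb; lia).
      replace (move_last (S j) (S p) j) with j by (case_ltb; lia).
      replace (move_last (S j) (S p) (S p)) with (S j) by (case_ltb; lia).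
      rewrite op_comm by (apply HD; lia). apply Hex; lia.
Qed.

Lemma foldop_perm_le_diag m g sigma :
  entries_in m g -> exchange m g -> is_perm (S m) sigma ->
  le (foldop op (fun i => g (sigma i) i) m) (foldop op (fun i => g i i) m).
Proof.
  revert g sigma. induction m as [|m IH]; intros g sigma HD Hex Hsigma.
  - simpl. replace (sigma 0%nat) with 0%nat
      by (destruct Hsigma as [Hlt _]; specialize (Hlt 0%nat); lia).
    apply (mp_refl _ Hle).
  - (* The first [m] slots are sorted by induction on [g] with row [sigma (S m)]
       removed; [foldop_move_last_le] then puts that row back in place. *)
    pose proof Hsigma as [Hlt Hinj].
    set (j := sigma (S m)).
    assert (Hj : (j <= S m)%nat) by (apply Nat.lt_succ_r, Hlt; lia).
    assert (Hsj : forall i, (i <= m)%nat -> sigma i <> j)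
      by (intros i Hi E; apply Hinj in E; lia).
    assert (HDs : entries_in m (fun i k => g (skip j i) k))
      by (intros i k Hi Hk; apply HD; auto using skip_le).
    assert (Hexs : exchange m (fun i k => g (skip j i) k))
      by (intros i i' k l **; apply Hex; auto using skip_mono, skip_le).
    pose proof (IH _ _ HDs Hexs (is_perm_unskip m sigma Hsigma)) as Hrec.
    rewrite (foldop_ext _ _ (fun i => g (sigma i) i)) in Hrec
      by (intros i Hi; rewrite skip_unskip; auto).
    rewrite (foldop_ext _ (fun i => g (skip j i) i) (fun i => g (move_last j (S m) i) i)) in Hrec
      by (intros; unfold move_last; destruct (Nat.ltb_spec i (S m)); [auto | lia]).
    apply (mp_trans _ Hle) with (foldop op (fun i => g (move_last j (S m) i) i) (S m));
      [| apply foldop_move_last_le; auto].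
    simpl. replace (move_last j (S m) (S m)) with j by (case_ltb; lia).
    apply (mp_monol _ Hle); auto.
    + apply foldop_closed. intros; apply HD; [apply Nat.lt_succ_r, Hlt |]; lia.
    + apply foldop_closed. intros; apply HD; [apply move_last_le |]; lia.
Qed.

End Monotone.

Lemma foldop_antidiag_le_perm le m g sigma :
  monotone_preorder le -> entries_in m g -> exchange le m g -> is_perm (S m) sigma ->
  le (foldop op (fun i => g (m - i)%nat i) m) (foldop op (fun i => g (sigma i) i) m).
Proof.
  intros Hle HD Hex Hsigma.
  assert (HDrev : entries_in m (fun i k => g (m - i)%nat k))
    by (intros i k Hi Hk; apply HD; lia).
  assert (Hexrev : exchange (fun a b => le b a) m (fun i k => g (m - i)%nat k)).
  { intros i j k l **. rewrite (op_comm (g (m - i)%nat l)), (op_comm (g (m - i)%nat k))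
      by (apply HD; lia).
    apply Hex; lia. }
  pose proof (foldop_perm_le_diag _ (monotone_preorder_flip _ Hle) m _ _ HDrev Hexrev
                (is_perm_rev m sigma Hsigma)) as Hrev.
  rewrite (foldop_ext _ _ (fun i => g (sigma i) i)) in Hrev; [exact Hrev |].
  intros i Hi. destruct Hsigma as [Hlt _]. specialize (Hlt i ltac:(lia)).
  f_equal; lia.
Qed.

End FoldCommSemigroup.

Lemma in01_compl x : in01 x -> in01 (1 - x).
Proof. unfold in01; lra. Qed.

Lemma uninorm_in01 u : is_uninorm u -> forall x y, in01 x -> in01 y -> in01 (u x y).
Proof. intros [Hin _]; exact Hin. Qed.

Lemma uninorm_comm u : is_uninorm u -> forall x y, in01 x -> in01 y -> u x y = u y x.
Proof. intros [_ [Hcomm _]]; exact Hcomm. Qed.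

Lemma uninorm_assoc u : is_uninorm u ->
  forall x y z, in01 x -> in01 y -> in01 z -> u (u x y) z = u x (u y z).
Proof. intros [_ [_ [Hassoc _]]]; exact Hassoc. Qed.

Lemma uninorm_monol u : is_uninorm u ->
  forall x y z, in01 x -> in01 y -> in01 z -> x <= y -> u x z <= u y z.
Proof. intros [_ [_ [_ [Hmono _]]]]; exact Hmono. Qed.

Lemma uninorm_monor u : is_uninorm u ->
  forall x y z, in01 x -> in01 y -> in01 z -> y <= z -> u x y <= u x z.
Proof.
  intros Hu x y z Hx Hy Hz Hyz.
  rewrite !(uninorm_comm u Hu x) by auto. apply uninorm_monol; auto.
Qed.

Lemma uninorm_monotone_Rle u : is_uninorm u -> monotone_preorder in01 u Rle.
Proof. intros Hu; split; [intros; lra | intros; lra | apply uninorm_monol; auto]. Qed.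

Lemma uninorm_monotone_Rge u : is_uninorm u -> monotone_preorder in01 u Rge.
Proof.
  intros Hu; split; [intros; lra | intros; lra |].
  intros. apply Rle_ge, uninorm_monol; auto with real.
Qed.

Lemma foldop_arrangement_bounds (le : R -> R -> Prop) (outer inner : R -> R -> R)
  (n : nat) (x y : nat -> R) (sigma : nat -> nat) :
  is_uninorm outer -> monotone_preorder in01 outer le ->
  (forall a b, in01 a -> in01 b -> in01 (inner a b)) ->
  (forall p q r s, in01 p -> in01 q -> in01 r -> in01 s -> p <= q -> r <= s ->
     le (outer (inner p s) (inner q r)) (outer (inner p r) (inner q s))) ->
  (1 <= n)%nat -> sorted01 n x -> sorted01 n y -> is_perm n sigma ->
  le (foldop outer (fun i => inner (x (n - 1 - i)%nat) (y i)) (n - 1))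
     (foldop outer (fun i => inner (x (sigma i)) (y i)) (n - 1)) /\
  le (foldop outer (fun i => inner (x (sigma i)) (y i)) (n - 1))
     (foldop outer (fun i => inner (x i) (y i)) (n - 1)).
Proof.
  intros Hu Hle Hinner Hex2 Hn [Hx Hxs] [Hy Hys] Hsigma.
  replace n with (S (n - 1)) in Hsigma, Hx, Hy, Hxs, Hys by lia.
  set (g := fun i k => inner (x i) (y k)).
  assert (HD : entries_in in01 (n - 1) g)
    by (intros i k Hi Hk; apply Hinner; [apply Hx | apply Hy]; lia).
  assert (Hex : exchange outer le (n - 1) g).
  { intros i j k l Hij Hj Hkl Hl.
    apply Hex2; try apply Hxs; try apply Hys; try apply Hx; try apply Hy; lia. }
  pose proof (uninorm_in01 _ Hu). pose proof (uninorm_comm _ Hu). pose proof (uninorm_assoc _ Hu).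
  split.
  - exact (foldop_antidiag_le_perm in01 outer ltac:(auto) ltac:(auto) ltac:(auto)
             le (n - 1) g sigma Hle HD Hex Hsigma).
  - exact (foldop_perm_le_diag in01 outer ltac:(auto) ltac:(auto) ltac:(auto)
             le Hle (n - 1) g sigma HD Hex Hsigma).
Qed.

Lemma rearrangement_of_exchange otimes oplus :
  is_uninorm oplus -> (forall a b, in01 a -> in01 b -> in01 (otimes a b)) ->
  (forall p q r s, in01 p -> in01 q -> in01 r -> in01 s -> p <= q -> r <= s ->
     oplus (otimes p s) (otimes q r) <= oplus (otimes p r) (otimes q s)) ->
  rearrangement otimes oplus.
Proof.
  intros Hu Hinner Hex2 n x y sigma.
  apply foldop_arrangement_bounds; auto using uninorm_monotone_Rle.
Qed.

Lemma dual_rearrangement_of_exchange otimes oplus :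
  is_uninorm otimes -> (forall a b, in01 a -> in01 b -> in01 (oplus a b)) ->
  (forall p q r s, in01 p -> in01 q -> in01 r -> in01 s -> p <= q -> r <= s ->
     otimes (oplus p s) (oplus q r) >= otimes (oplus p r) (oplus q s)) ->
  dual_rearrangement otimes oplus.
Proof.
  intros Hu Hinner Hex2 n x y sigma.
  apply foldop_arrangement_bounds; auto using uninorm_monotone_Rge.
Qed.

Lemma one_minus_involutive a : 1 - (1 - a) = a.
Proof. ring. Qed.

Lemma Phi_involutive f : Phi (Phi f) = f.
Proof.
  extensionality x; extensionality y. unfold Phi.
  rewrite !one_minus_involutive. ring.
Qed.

Lemma Phi_uninorm u : is_uninorm u -> is_uninorm (Phi u).
Proof.
  intros Hu. unfold Phi.
  assert (Hin : forall x y, in01 x -> in01 y -> in01 (u (1 - x) (1 - y)))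
    by (intros; apply (uninorm_in01 u Hu); apply in01_compl; auto).
  split; [| split; [| split; [| split]]].
  - intros x y Hx Hy. apply in01_compl; auto.
  - intros x y Hx Hy. rewrite (uninorm_comm u Hu) by (apply in01_compl; auto). reflexivity.
  - intros x y z Hx Hy Hz. rewrite !one_minus_involutive.
    rewrite (uninorm_assoc u Hu) by (apply in01_compl; auto). reflexivity.
  - intros x y z Hx Hy Hz Hxy.
    enough (u (1 - y) (1 - z) <= u (1 - x) (1 - z)) by lra.
    apply (uninorm_monol u Hu); try apply in01_compl; auto; lra.
  - destruct Hu as [_ [_ [_ [_ [e [He Hid]]]]]].
    exists (1 - e). split; [apply in01_compl; auto |].
    intros x Hx. rewrite one_minus_involutive, Hid by (apply in01_compl; auto). ring.
Qed.

Lemma propA_Phi v : is_uninorm v -> propA' v -> propA (Phi v).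
Proof.
  intros Hv HA x y z w Hx Hxy Hyz Hzw Hw Hsum. unfold Phi.
  assert (HA' := HA (1 - w) (1 - z) (1 - y) (1 - x)).
  rewrite (uninorm_comm v Hv (1 - w)), (uninorm_comm v Hv (1 - z)) in HA'
    by (unfold in01; lra).
  enough (v (1 - y) (1 - z) <= v (1 - x) (1 - w)) by lra.
  apply Rge_le, HA'; lra.
Qed.

Lemma propB_Phi v : propB' v -> propB (Phi v).
Proof.
  intros HB x y z w Hx Hxy Hy Hz Hzw Hw. unfold Phi.
  assert (HB' := HB (1 - y) (1 - x) (1 - w) (1 - z)). lra.
Qed.

Lemma propA_comm u : is_uninorm u -> propA u ->
  forall x y z w, 0 <= x -> x <= y -> x <= z -> y <= w -> z <= w -> w <= 1 ->
    w + x <= y + z -> u x w <= u y z.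
Proof.
  intros Hu HA x y z w **. destruct (Rle_dec y z).
  - apply HA; lra.
  - rewrite (uninorm_comm u Hu y) by (unfold in01; lra). apply HA; lra.
Qed.

Lemma propAB_exchange u : is_uninorm u -> propA u -> propB u ->
  forall p q r s, in01 p -> in01 q -> in01 r -> in01 s -> p <= q -> r <= s ->
    u (1 - u p r) (1 - u q s) <= u (1 - u p s) (1 - u q r).
Proof.
  intros Hu HA HB p q r s Hp Hq Hr Hs Hpq Hrs.
  pose proof (uninorm_in01 u Hu) as Hin.
  assert (Hcr : u p r <= u p s) by (apply (uninorm_monor u Hu); auto).
  assert (Hcb : u p r <= u q r) by (apply (uninorm_monol u Hu); auto).
  assert (Had : u p s <= u q s) by (apply (uninorm_monol u Hu); auto).
  assert (Hbd : u q r <= u q s) by (apply (uninorm_monor u Hu); auto).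
  assert (Ha := Hin p s Hp Hs). assert (Hb := Hin q r Hq Hr).
  assert (Hc := Hin p r Hp Hr). assert (Hd := Hin q s Hq Hs).
  rewrite (uninorm_comm u Hu) by (apply in01_compl; auto).
  unfold in01 in *.
  assert (Hsuper : u p s - u p r <= u q s - u q r) by (apply HB; lra).
  apply (propA_comm u Hu HA); lra.
Qed.

Lemma rearrangements_Phi u : is_uninorm u -> propA u -> propB u ->
  rearrangement u (Phi u) /\ dual_rearrangement u (Phi u).
Proof.
  intros Hu HA HB. split.
  - apply rearrangement_of_exchange; [apply Phi_uninorm; auto | apply uninorm_in01; auto |].
    intros p q r s **. unfold Phi.
    enough (u (1 - u p r) (1 - u q s) <= u (1 - u p s) (1 - u q r)) by lra.
    apply (propAB_exchange u); auto.
  - apply dual_rearrangement_of_exchange; [auto | apply uninorm_in01, Phi_uninorm; auto |].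
    intros p q r s Hp Hq Hr Hs Hpq Hrs. unfold Phi.
    assert (Hc : forall a b, in01 a -> in01 b -> in01 (1 - u (1 - a) (1 - b)))
      by (intros; apply in01_compl, (uninorm_in01 u Hu); apply in01_compl; auto).
    rewrite (uninorm_comm u Hu (1 - u (1 - p) (1 - s))),
            (uninorm_comm u Hu (1 - u (1 - p) (1 - r))) by auto.
    apply Rle_ge, (propAB_exchange u); try apply in01_compl; auto; lra.
Qed.

Theorem corollary4 :
  (forall otimes : R -> R -> R,
     is_uninorm otimes -> propA otimes -> propB otimes ->
     rearrangement otimes (Phi otimes) /\ dual_rearrangement otimes (Phi otimes)) /\
  (forall oplus : R -> R -> R,
     is_uninorm oplus -> propA' oplus -> propB' oplus ->
     rearrangement (Phi oplus) oplus /\ dual_rearrangement (Phi oplus) oplus).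
Proof.
  split; [exact rearrangements_Phi |].
  intros v Hv HA' HB'.
  rewrite <- (Phi_involutive v) at 2 4.
  apply rearrangements_Phi; auto using Phi_uninorm, propA_Phi, propB_Phi.
Qed.
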